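(* Assume Conditions (A), (P) and (Ah) from the context and let $\tau>0$. With $S_{h,\tau}=(I+\tau A_{h,2})^{-1}(I+\tau A_{h,1})^{-1}(I+\tau^2A_{h,1}A_{h,2})$, for every $n\in\mathbb N$, \[\|S_{h,\tau}^n(I+\tau A_{h,2})^{-1}\|_{\mathcal L(H)}\le1.\]
   Context: $(H,(\cdot,\cdot)_H,\|\cdot\|_H)$ is a real Hilbert space with complexification $H_{\mathbb C}$; $C$ denotes generic constants independent of $h$. Condition (A): $A:\mathrm{dom}(A)\subset H\to H$ and $A_\ell:\mathrm{dom}(A_\ell)\subset H\to H$ ($\ell=1,2$) are linear with $A=A_1+A_2$ on $\mathrm{dom}(A_1)\cap\mathrm{dom}(A_2)\subseteq\mathrm{dom}(A)$; $A$ is densely defined, positive and sectorial: there is $\varphi\in(0,\pi/2)$ such that $0$ and $S_\varphi=\{\lambda\in\mathbb C:\varphi<|\arg\lambda|\le\pi\}$ lie in the resolvent set and $\|(A-\lambda I)^{-1}\|_{\mathcal L(H_{\mathbb C})}\le C/|\lambda|$ on $S_\varphi$; $A_\ell A^{-1}$ is a well-defined bounded operator on $H$. Condition (P): $V_h\subset H$ ($h\in I\subset(0,\infty)$) are finite-dimensional subspaces and $P_h:H\to V_h$ bounded projections with $\|(I-P_h)v\|_H\le Ch^2\|Av\|_H$ for $v\in\mathrm{dom}(A)$. Condition (Ah): $V_h$ carries an inner product with norm $\|\cdot\|_{V_h}$, $\|v_h\|_H\le C\|v_h\|_{V_h}$, and $A_h,A_{h,1},A_{h,2}\in\mathcal L(V_h)$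 satisfy for all $v_h,w_h\in V_h$, $\ell=1,2$: (a) $(A_hv_h,v_h)_H\ge C\|v_h\|^2_{V_h}$; (b) $|(A_hv_h,w_h)_H|\le C\|v_h\|_{V_h}\|w_h\|_{V_h}$; (c) $A_h=A_{h,1}+A_{h,2}$; (d) $(A_{h,\ell}v_h,v_h)_H\ge0$; (e) $\|A_{h,\ell}P_h\|_{\mathcal L(H)}\le Ch^{-2}$; (f) $\|(P_hA_\ell-A_{h,\ell}P_h)v\|_H\le C\|Av\|_H$ for $v\in\mathrm{dom}(A)$; (g) $\|A^{-1}-A_h^{-1}P_h\|_{\mathcal L(H)}\le Ch^2$. Operators on $V_h$ are measured in the operator norm of $(V_h,\|\cdot\|_H)$ (equivalently, composed with $P_h$, as operators on $H$). *)

From HB Require Import structures.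
From mathcomp Require Import all_boot all_order all_algebra.
From mathcomp Require Import all_classical all_reals all_analysis.
Set Implicit Arguments. Unset Strict Implicit. Unset Printing Implicit Defensive.
Import Order.TTheory GRing.Theory Num.Theory.
Import numFieldNormedType.Exports.
Local Open Scope classical_set_scope.
Local Open Scope ring_scope.

Section Defs.
Variables (R : realType) (H : completeNormedModType R).

(* ( , )_H is an inner product inducing the norm of H (so H is a real Hilbert space) *)
Definition inner_product (ip : H -> H -> R) : Prop :=
  (forall x y, ip x y = ip y x) /\
  (forall (a : R) x y z, ip (a *: x + y) z = a * ip x z + ip y z) /\
  (forall x, ip x x = `|x| ^+ 2).

Definition subspace (D : set H) : Prop :=
  D 0 /\ forall (a : R) x y, D x -> D y -> D (a *: x + y).

Definition linear_on (D : set H) (T : H -> H) : Prop :=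
  forall (a : R) x y, D x -> D y -> T (a *: x + y) = a *: T x + T y.

Definition findim (V : set H) : Prop :=
  exists (n : nat) (e : 'I_n -> H),
    V = [set x | exists c : 'I_n -> R, x = \sum_(i < n) c i *: e i].

(* norm of the complexification H_C = H + iH: |u1 + i u2| *)
Definition cnorm (u1 u2 : H) : R := Num.sqrt (`|u1| ^+ 2 + `|u2| ^+ 2).

(* real and imaginary parts of (A - (a + i b)) (u1 + i u2) *)
Definition shift_re (A : H -> H) (a b : R) (u1 u2 : H) : H := A u1 - a *: u1 + b *: u2.
Definition shift_im (A : H -> H) (a b : R) (u1 u2 : H) : H := A u2 - a *: u2 - b *: u1.

(* a + i b lies in the resolvent set of A (with domain D), as an operator on H_C:
   A - lambda is a bijection dom(A)_C -> H_C with bounded inverse *)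
Definition in_resolvent (D : set H) (A : H -> H) (a b : R) : Prop :=
  (forall f1 f2, exists u1 u2, [/\ D u1, D u2,
      shift_re A a b u1 u2 = f1 & shift_im A a b u1 u2 = f2]) /\
  (forall u1 u2, D u1 -> D u2 -> shift_re A a b u1 u2 = 0 ->
      shift_im A a b u1 u2 = 0 -> u1 = 0 /\ u2 = 0) /\
  (exists M : R, forall u1 u2, D u1 -> D u2 ->
      cnorm u1 u2 <= M * cnorm (shift_re A a b u1 u2) (shift_im A a b u1 u2)).

(* a + i b in S_phi = {lambda : phi < |arg lambda| <= pi}, i.e. lambda <> 0 and
   Re lambda < |lambda| cos phi *)
Definition in_sector (phi a b : R) : Prop :=
  (a, b) <> (0, 0) /\ a < cos phi * Num.sqrt (a ^+ 2 + b ^+ 2).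

Definition condA (ip : H -> H -> R) (D D1 D2 : set H) (A A1 A2 : H -> H) : Prop :=
  [/\ subspace D /\ subspace D1 /\ subspace D2,
      linear_on D A /\ linear_on D1 A1 /\ linear_on D2 A2,
      (forall v, D1 v -> D2 v -> D v /\ A v = A1 v + A2 v),
      (closure D = setT) /\ (forall v, D v -> 0 <= ip (A v) v) /\
      (exists phi : R, [/\ 0 < phi, phi < pi / 2, in_resolvent D A 0 0 &
        exists C : R, forall a b, in_sector phi a b ->
          in_resolvent D A a b /\
          forall u1 u2, D u1 -> D u2 ->
            cnorm u1 u2 <= C / Num.sqrt (a ^+ 2 + b ^+ 2) *
                           cnorm (shift_re A a b u1 u2) (shift_im A a b u1 u2) ]) &
      (* A_l A^{-1} is a well-defined bounded operator on H *)
      ((forall v, D v -> D1 v /\ D2 v) /\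
       exists C : R, forall v, D v -> `|A1 v| <= C * `|A v| /\ `|A2 v| <= C * `|A v|) ].

Definition condP (I : set R) (V : R -> set H) (P : R -> H -> H)
    (D : set H) (A : H -> H) : Prop :=
  (forall h, I h -> 0 < h) /\
  (forall h, I h -> [/\ subspace (V h) /\ findim (V h), linear_on setT (P h),
      (forall v, V h (P h v)), (forall v, V h v -> P h v = v) &
      exists c : R, forall v, `|P h v| <= c * `|v| ]) /\
  (exists C : R, forall h, I h -> forall v, D v ->
      `|v - P h v| <= C * h ^+ 2 * `|A v|).

Definition normV (ipV : R -> H -> H -> R) (h : R) (v : H) : R := Num.sqrt (ipV h v v).

Definition condAh (ip : H -> H -> R) (I : set R) (V : R -> set H) (P : R -> H -> H)
    (D : set H) (A A1 A2 : H -> H) (ipV : R -> H -> H -> R)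
    (Ah Ah1 Ah2 : R -> H -> H) : Prop :=
  exists c C : R, 0 < c /\ forall h, I h ->
  [/\
      (forall x y, V h x -> V h y -> ipV h x y = ipV h y x) /\
      (forall (a : R) x y z, V h x -> V h y -> V h z ->
          ipV h (a *: x + y) z = a * ipV h x z + ipV h y z) /\
      (forall x, V h x -> x <> 0 -> 0 < ipV h x x),
      (forall v, V h v -> `|v| <= C * normV ipV h v),
      (forall T, T = Ah h \/ T = Ah1 h \/ T = Ah2 h ->
          linear_on (V h) T /\ forall v, V h v -> V h (T v)),
      forall v w, V h v -> V h w ->
      [/\ ip (Ah h v) v >= c * normV ipV h v ^+ 2,
          `|ip (Ah h v) w| <= C * normV ipV h v * normV ipV h w,
          Ah h v = Ah1 h v + Ah2 h v,
          ip (Ah1 h v) v >= 0 & ip (Ah2 h v) v >= 0 ]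
   & [/\ (forall v, `|Ah1 h (P h v)| <= C * h ^- 2 * `|v| /\
                    `|Ah2 h (P h v)| <= C * h ^- 2 * `|v|),
         (forall v, D v -> `|P h (A1 v) - Ah1 h (P h v)| <= C * `|A v| /\
                           `|P h (A2 v) - Ah2 h (P h v)| <= C * `|A v|) &
         (* (g): || A^{-1} f - A_h^{-1} P_h f || <= C h^2 ||f||, written with f = A v *)
         (forall v w, D v -> V h w -> Ah h w = P h (A v) ->
             `|v - w| <= C * h ^+ 2 * `|A v|) ] ].

(* (I + tau T)^{-1} on V_h: the unique w in V_h with w + tau T w = v *)
Definition resolv (Vh : set H) (T : H -> H) (tau : R) (v : H) : H :=
  xget 0 [set w | Vh w /\ w + tau *: T w = v].

Definition Sht (Vh : set H) (T1 T2 : H -> H) (tau : R) (v : H) : H :=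
  resolv Vh T2 tau (resolv Vh T1 tau (v + tau ^+ 2 *: T1 (T2 v))).

End Defs.

From Pilot Require Import Defs.
From HB Require Import structures.
From mathcomp Require Import all_boot all_order all_algebra.
From mathcomp Require Import all_classical all_reals all_analysis.
From mathcomp Require Import lra.
Set Implicit Arguments.
Unset Strict Implicit.
Unset Printing Implicit Defensive.
Import Order.TTheory GRing.Theory Num.Theory.
Import numFieldNormedType.Exports.
Local Open Scope classical_set_scope.
Local Open Scope ring_scope.

(* Write R_i = (I + tau A_{h,i})^-1 and u = tau A_{h,2} w.  Since
   (I + tau^2 A_{h,1} A_{h,2}) w = w + tau A_{h,1} u, the point
   z = R_1 (w + tau A_{h,1} u) satisfies (I + tau A_{h,1}) (z - u) = w - u, and
   the accretivity of A_{h,1} makes the Cayley transform (I - tau A_{h,1}) R_1 a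
   contraction.  As 2 z = (w + u) + (I - tau A_{h,1}) R_1 (w - u) and
   |w - u| <= |w + u| by the accretivity of A_{h,2}, we get
   |z| <= |w + u| = |(I + tau A_{h,2}) w|.  Hence w |-> |(I + tau A_{h,2}) w| does
   not increase along S_{h,tau}, it is at most |v| at w = R_2 v, and it
   dominates |w|. *)

Section InnerProduct.
Variables (R : realType) (H : completeNormedModType R) (ip : H -> H -> R).
Hypothesis ip_inner : inner_product ip.

Lemma ipC x y : ip x y = ip y x.
Proof. by case: ip_inner. Qed.

Lemma ipDl x y z : ip (x + y) z = ip x z + ip y z.
Proof. by case: ip_inner => _ [lin _]; have := lin 1 x y z; rewrite scale1r mul1r. Qed.

Lemma ip0l z : ip 0 z = 0.
Proof. by apply: (addrI (ip 0 z)); rewrite -ipDl !addr0. Qed.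

Lemma ipZl a x z : ip (a *: x) z = a * ip x z.
Proof. by case: ip_inner => _ [lin _]; rewrite -[a *: x]addr0 lin ip0l addr0. Qed.

Lemma ipNl x z : ip (- x) z = - ip x z.
Proof. by rewrite -scaleN1r ipZl mulN1r. Qed.

Lemma normD_sqr x y : `|x + y| ^+ 2 = `|x| ^+ 2 + 2 * ip x y + `|y| ^+ 2.
Proof.
case: ip_inner => _ [_ ipxx].
by rewrite -!ipxx ipDl !(ipC _ (x + y)) !ipDl (ipC y x) mulr2n mulrDl mul1r !addrA.
Qed.

Lemma normB_sqr x y : `|x - y| ^+ 2 = `|x| ^+ 2 - 2 * ip x y + `|y| ^+ 2.
Proof. by rewrite normD_sqr normrN ipC ipNl ipC mulrN. Qed.

Lemma normB_le_normD x y : 0 <= ip x y -> `|x - y| <= `|x + y|.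
Proof. by move=> xy; rewrite -ler_sqr ?nnegrE // normB_sqr normD_sqr; lra. Qed.

Lemma norm_le_normD x y : 0 <= ip x y -> `|x| <= `|x + y|.
Proof.
move=> xy; rewrite -ler_sqr ?nnegrE // normD_sqr.
by have := sqr_ge0 `|y|; lra.
Qed.

End InnerProduct.

Section Accretive.
Variables (R : realType) (H : completeNormedModType R) (ip : H -> H -> R).
Hypothesis ip_inner : inner_product ip.
Variables (V : set H) (T : H -> H) (tau : R).
Hypotheses (V_subspace : Defs.subspace V) (T_linear : linear_on V T).
Hypothesis T_accretive : forall x, V x -> 0 <= ip (T x) x.
Hypothesis tau_ge0 : 0 <= tau.

Lemma subspace0 : V 0.
Proof. by case: V_subspace. Qed.

Lemma subspaceZ a x : V x -> V (a *: x).
Proof. by case: V_subspace => V0 lin Vx; rewrite -[a *: x]addr0; apply: lin. Qed.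

Lemma subspaceB x y : V x -> V y -> V (x - y).
Proof. by case: V_subspace => _ lin Vx Vy; rewrite addrC -scaleN1r; apply: lin. Qed.

Lemma linear_on0 : T 0 = 0.
Proof.
have := T_linear 1 subspace0 subspace0; rewrite !scale1r addr0 => T0.
by apply: (addrI (T 0)); rewrite addr0 -T0.
Qed.

Lemma linear_onZ a x : V x -> T (a *: x) = a *: T x.
Proof.
move=> Vx; have := T_linear a Vx subspace0; rewrite !addr0 => ->.
by rewrite -[RHS]addr0; congr (_ + _); exact: linear_on0.
Qed.

Lemma linear_onB x y : V x -> V y -> T (x - y) = T x - T y.
Proof.
by move=> Vx Vy; rewrite addrC -scaleN1r T_linear // scaleN1r addrC.
Qed.

Lemma ip_scale_accretive_ge0 x : V x -> 0 <= ip x (tau *: T x).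
Proof.
by move=> Vx; rewrite (ipC ip_inner) (ipZl ip_inner) mulr_ge0 ?T_accretive.
Qed.

(* [resolv] returns 0 when [b] has no preimage under I + tau T in V; both
   alternatives satisfy the estimates below. *)
Lemma resolvP b :
  V (resolv V T tau b) /\
  (resolv V T tau b + tau *: T (resolv V T tau b) = b \/ resolv V T tau b = 0).
Proof.
rewrite /resolv.
have [ex|nex] := pselect (exists w, V w /\ w + tau *: T w = b).
  by have [] := xgetPex 0 ex; split => //; left.
rewrite xgetPN; first by split; [exact: subspace0 | right].
by move=> x hx; apply: nex; exists x.
Qed.

Lemma norm_le_normDT x : V x -> `|x| <= `|x + tau *: T x|.
Proof. by move=> Vx; apply: (norm_le_normD ip_inner); exact: ip_scale_accretive_ge0. Qed.

Lemma normDT_resolv_le b :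
  `|resolv V T tau b + tau *: T (resolv V T tau b)| <= `|b|.
Proof.
have [_ [->|->]] := resolvP b => //.
by rewrite linear_on0 scaler0 addr0 normr0.
Qed.

Lemma cayley_contraction x : V x -> `|x - tau *: T x| <= `|x + tau *: T x|.
Proof. by move=> Vx; apply: (normB_le_normD ip_inner); exact: ip_scale_accretive_ge0. Qed.

Lemma norm_resolv_le_normD w u : V w -> V u -> 0 <= ip u w ->
  `|resolv V T tau (w + tau *: T u)| <= `|w + u|.
Proof.
move=> Vw Vu uw; have [Vz [eqz|->]] := resolvP (w + tau *: T u); last first.
  by rewrite normr0.
set z := resolv _ _ _ _ in Vz eqz *; set r := z - u.
have Vr : V r by apply: subspaceB.
have eqr : r + tau *: T r = w - u.
  apply: (addIr (u + tau *: T u)).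
  by rewrite /r linear_onB // scalerBr addrACA !subrK addrA subrK.
have twice_z : z *+ 2 = (w + u) + (r - tau *: T r).
  rewrite (_ : tau *: T r = (w - u) - r); last by rewrite -eqr addrC addKr.
  rewrite /r !opprB [z - u + (u - w)]addrA subrK (addrC (z - u)) addrACA.
  by rewrite (addrCA w) (addrCA u) !subrr !addr0 mulr2n.
have : `|z| *+ 2 <= `|w + u| + `|w - u|.
  rewrite -normrMn twice_z; apply: le_trans (ler_normD _ _) _.
  by rewrite lerD2l -eqr cayley_contraction.
have : `|w - u| <= `|w + u| by apply: (normB_le_normD ip_inner); rewrite (ipC ip_inner).
rewrite mulr2n; lra.
Qed.

End Accretive.

Section Splitting.
Variables (R : realType) (H : completeNormedModType R) (ip : H -> H -> R).
Hypothesis ip_inner : inner_product ip.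
Variables (V : set H) (T1 T2 : H -> H) (tau : R).
Hypothesis V_subspace : Defs.subspace V.
Hypotheses (T1_linear : linear_on V T1) (T2_linear : linear_on V T2).
Hypotheses (T1_accretive : forall x, V x -> 0 <= ip (T1 x) x)
           (T2_accretive : forall x, V x -> 0 <= ip (T2 x) x).
Hypothesis T2_stable : forall x, V x -> V (T2 x).
Hypothesis tau_ge0 : 0 <= tau.

Local Notation S := (Sht V T1 T2 tau).

Lemma Sht_normDT_le w : V w ->
  V (S w) /\ `|S w + tau *: T2 (S w)| <= `|w + tau *: T2 w|.
Proof.
move=> Vw; rewrite /Sht.
set z := resolv V T1 tau _; have [VSw _] := resolvP T2 tau V_subspace z.
split => //; apply: le_trans (normDT_resolv_le tau V_subspace T2_linear z) _.
have VtauT2w : V (tau *: T2 w) by apply: subspaceZ; last exact: T2_stable.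
rewrite /z -[tau ^+ 2 *: _]scalerA -(linear_onZ V_subspace T1_linear _ (T2_stable Vw)).
apply: (norm_resolv_le_normD ip_inner) => //.
by rewrite (ipZl ip_inner) mulr_ge0 ?T2_accretive.
Qed.

Lemma iter_Sht_normDT_le n w : V w ->
  V (iter n S w) /\ `|iter n S w + tau *: T2 (iter n S w)| <= `|w + tau *: T2 w|.
Proof.
move=> Vw; elim: n => [|n [Vn le_n]] /=; first by split.
have [VSn le_Sn] := Sht_normDT_le Vn.
by split; last exact: le_trans le_Sn le_n.
Qed.

End Splitting.

Theorem lemma4p2 (R : realType) (H : completeNormedModType R)
    (ip : H -> H -> R) (D D1 D2 : set H) (A A1 A2 : H -> H)
    (I : set R) (V : R -> set H) (P : R -> H -> H)
    (ipV : R -> H -> H -> R) (Ah Ah1 Ah2 : R -> H -> H) :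
  inner_product ip ->
  condA ip D D1 D2 A A1 A2 ->
  condP I V P D A ->
  condAh ip I V P D A A1 A2 ipV Ah Ah1 Ah2 ->
  forall (h tau : R), I h -> 0 < tau ->
  forall (n : nat) (v : H), V h v ->
    `| iter n (Sht (V h) (Ah1 h) (Ah2 h) tau) (resolv (V h) (Ah2 h) tau v) | <= `|v|.
Proof.
move=> ip_inner _ [_ [condPh _]] [? [? [_ condAhh]]] h tau Ih tau_gt0 n v _.
have [[Vh_subspace _] _ _ _ _] := condPh h Ih.
have [_ _ Ah_linear Ah_form _] := condAhh h Ih.
have [lin1 _] := Ah_linear (Ah1 h) (or_intror (or_introl erefl)).
have [lin2 stable2] := Ah_linear (Ah2 h) (or_intror (or_intror erefl)).
have acc1 x : V h x -> 0 <= ip (Ah1 h x) x by move=> Vx; have [] := Ah_form x x Vx Vx.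
have acc2 x : V h x -> 0 <= ip (Ah2 h x) x by move=> Vx; have [] := Ah_form x x Vx Vx.
have tau_ge0 := ltW tau_gt0.
have [Vw0 _] := resolvP (Ah2 h) tau Vh_subspace v.
have [Vn le_n] := iter_Sht_normDT_le ip_inner Vh_subspace lin1 lin2 acc1 acc2 stable2
  tau_ge0 n Vw0.
apply: le_trans (norm_le_normDT ip_inner acc2 tau_ge0 Vn) _.
exact: le_trans le_n (normDT_resolv_le tau Vh_subspace lin2 v).
Qed.
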